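(* If $C$ is a projective linear code of length $n$ over $\mathbb{Z}_4$ of type $4^{k_1}2^{k_2}$, then $n\le 2^{2k_1+k_2-1}-2^{k_1+k_2-1}$.
   Context: A linear code of length $n$ over $\mathbb{Z}_4$ is a $\mathbb{Z}_4$-submodule of $\mathbb{Z}_4^n$, of type $4^{k_1}2^{k_2}$ if isomorphic to $\mathbb{Z}_4^{k_1}\times\mathbb{Z}_2^{k_2}$. Lee weight: $w_L(0)=0,w_L(1)=1,w_L(2)=2,w_L(3)=1$, additive on vectors. $C$ is projective if its dual $C^\perp=\{\mathbf{x}:\sum x_iy_i=0\in\mathbb{Z}_4\ \forall\mathbf{y}\in C\}$ has minimum nonzero Lee weight at least $3$. *)

From HB Require Import structures.
From mathcomp Require Import all_boot all_order all_algebra.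
Set Implicit Arguments. Unset Strict Implicit. Unset Printing Implicit Defensive.
Import GRing.Theory.
Local Open Scope ring_scope.

Definition z4_linear_code (n : nat) (C : {set 'rV['Z_4]_n}) : Prop :=
  [/\ (0 : 'rV['Z_4]_n) \in C,
      (forall x y, x \in C -> y \in C -> x + y \in C) &
      (forall (a : 'Z_4) x, x \in C -> a *: x \in C)].

(* C is of type 4^k1 2^k2: C is isomorphic (as a Z_4-module, equivalently as an
   abelian group) to Z_4^k1 x Z_2^k2, witnessed by an additive bijection
   f : Z_4^k1 x Z_2^k2 -> C. *)
Definition z4_code_type (n k1 k2 : nat) (C : {set 'rV['Z_4]_n}) : Prop :=
  exists f : 'rV['Z_4]_k1 -> 'rV['Z_2]_k2 -> 'rV['Z_4]_n,
    [/\ (forall a1 b1 a2 b2, f (a1 + a2) (b1 + b2) = f a1 b1 + f a2 b2),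
        (forall a1 b1 a2 b2, f a1 b1 = f a2 b2 -> a1 = a2 /\ b1 = b2),
        (forall a b, f a b \in C) &
        (forall x, x \in C -> exists a b, f a b = x)].

Definition lee_weight (x : 'Z_4) : nat :=
  match val x with 0 => 0 | 1 => 1 | 2 => 2 | _ => 1 end%N.

Definition lee_weight_vec (n : nat) (v : 'rV['Z_4]_n) : nat :=
  (\sum_(i < n) lee_weight (v ord0 i))%N.

Definition z4_dual (n : nat) (C : {set 'rV['Z_4]_n}) : {set 'rV['Z_4]_n} :=
  [set x : 'rV['Z_4]_n | [forall y in C, \sum_(i < n) x ord0 i * y ord0 i == 0]].

Definition z4_projective (n : nat) (C : {set 'rV['Z_4]_n}) : Prop :=
  forall x, x \in z4_dual C -> x != 0 -> (3 <= lee_weight_vec x)%N.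

From mathcomp Require Import all_boot all_order all_algebra.
From mathcomp Require Import zify.
Set Implicit Arguments. Unset Strict Implicit. Unset Printing Implicit Defensive.
Import GRing.Theory.
Local Open Scope ring_scope.

(* For a coordinate i and a sign s, y |-> s * y_i is a homomorphism from C to
   Z_4, hence x |-> s * f(x)_i is one from Z_4^k1 x Z_2^k2.  A homomorphism
   Z_4^k1 x Z_2^k2 -> Z_4 is determined by the images of the generators, a
   value in Z_4 for each Z_4 factor and a value in {0, 2} for each Z_2 factor,
   and it lands in {0, 2} iff all the Z_4 generators do.  Projectivity forbids
   dual words of Lee weight 2: the word 2e_i shows that no signed coordinate
   lands in {0, 2}, and the words e_i +- e_j show that the 2n signed
   coordinates are pairwise distinct.  Hence 2n <= (4^k1 - 2^k1) 2^k2. *)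

Definition jointly_additive (U W V : zmodType) (g : U -> W -> V) : Prop :=
  forall a1 b1 a2 b2, g (a1 + a2) (b1 + b2) = g a1 b1 + g a2 b2.

Section JointlyAdditive.
Variables (U W V : zmodType) (g : U -> W -> V).
Hypothesis gD : jointly_additive g.

Lemma jointly_additive00 : g 0 0 = 0.
Proof. by apply: (@addrI _ (g 0 0)); rewrite addr0 -gD !addr0. Qed.

Lemma jointly_additive_split a b : g a b = g a 0 + g 0 b.
Proof. by rewrite -gD addr0 add0r. Qed.

Lemma jointly_additive_l x y : g (x + y) 0 = g x 0 + g y 0.
Proof. by rewrite -gD addr0. Qed.

Lemma jointly_additive_r x y : g 0 (x + y) = g 0 x + g 0 y.
Proof. by rewrite -gD addr0. Qed.

End JointlyAdditive.

Lemma additive_row_expand (p k : nat) (V : zmodType) (h : 'rV['Z_p.+2]_k -> V) :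
  (forall x y, h (x + y) = h x + h y) ->
  forall a, h a = \sum_(j < k) h 'e_j *+ (a 0 j : nat).
Proof.
move=> hD a.
have h0 : h 0 = 0 by apply: (@addrI _ (h 0)); rewrite -hD !addr0.
have hMn v m : h (v *+ m) = h v *+ m.
  by elim: m => [|m IH]; rewrite ?mulr0n // !mulrS hD IH.
rewrite {1}(row_sum_delta a) (big_morph h hD h0).
by apply: eq_bigr => j _; rewrite -{1}[a 0 j]natr_Zp scaler_nat hMn.
Qed.

Section GeneratorsZ4Z2.
Variables (k1 k2 : nat) (V : zmodType).
Implicit Type g : 'rV['Z_4]_k1 -> 'rV['Z_2]_k2 -> V.

Lemma jointly_additive_expand g : jointly_additive g -> forall a b,
  g a b = \sum_(j < k1) g 'e_j 0 *+ (a 0 j : nat)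
        + \sum_(j < k2) g 0 'e_j *+ (b 0 j : nat).
Proof.
move=> gD a b; rewrite (jointly_additive_split gD).
congr (_ + _).
  exact: (additive_row_expand (h := g^~ 0) (jointly_additive_l gD)).
exact: (additive_row_expand (h := g 0) (jointly_additive_r gD)).
Qed.

Lemma jointly_additive_eq g1 g2 :
  jointly_additive g1 -> jointly_additive g2 ->
  (forall j, g1 'e_j 0 = g2 'e_j 0) -> (forall j, g1 0 'e_j = g2 0 'e_j) ->
  forall a b, g1 a b = g2 a b.
Proof.
move=> g1D g2D e1 e2 a b.
rewrite (jointly_additive_expand g1D) (jointly_additive_expand g2D).
by congr (_ + _); apply: eq_bigr => j _; rewrite ?e1 ?e2.
Qed.

Lemma jointly_additive_Z2_2torsion g : jointly_additive g ->
  forall j, g 0 'e_j *+ 2 = 0.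
Proof.
move=> gD j; rewrite mulr2n -jointly_additive_r //.
have -> : 'e_j + 'e_j = 0 :> 'rV['Z_2]_k2.
  by apply/matrixP => r c; rewrite !mxE; case: (_ && _); apply/val_inj.
exact: jointly_additive00.
Qed.

Lemma jointly_additive_2torsion g : jointly_additive g ->
  (forall j, g 'e_j 0 *+ 2 = 0) -> forall a b, g a b *+ 2 = 0.
Proof.
move=> gD e2 a b; rewrite (jointly_additive_expand gD) mulrnDl -!sumrMnl.
by rewrite !big1 ?addr0 // => j _;
  rewrite mulrnAC ?e2 ?jointly_additive_Z2_2torsion // mul0rn.
Qed.

End GeneratorsZ4Z2.

Lemma z4_2torsion_eq (x y : 'Z_4) :
  x *+ 2 = 0 -> y *+ 2 = 0 -> (x == 0) = (y == 0) -> x = y.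
Proof.
move=> hx hy hxy; apply/val_inj; move: hx hy hxy.
by case: x => -[|[|[|[|?]]]] ?; case: y => -[|[|[|[|?]]]] ?.
Qed.

(* For additive g, g 0 'e_j lies in {0, 2}, so one bit records it. *)
Definition z4_signature (k1 k2 : nat) (g : 'rV['Z_4]_k1 -> 'rV['Z_2]_k2 -> 'Z_4) :
    ({ffun 'I_k1 -> 'Z_4} * {ffun 'I_k2 -> bool})%type :=
  ([ffun j => g 'e_j 0], [ffun j => g 0 'e_j != 0]).

Lemma z4_signature_inj (k1 k2 : nat) (g1 g2 : 'rV['Z_4]_k1 -> 'rV['Z_2]_k2 -> 'Z_4) :
  jointly_additive g1 -> jointly_additive g2 ->
  z4_signature g1 = z4_signature g2 -> forall a b, g1 a b = g2 a b.
Proof.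
move=> g1D g2D [/ffunP e1 /ffunP e2]; apply: jointly_additive_eq => // j.
  by have := e1 j; rewrite !ffunE.
apply: z4_2torsion_eq; rewrite ?jointly_additive_Z2_2torsion //.
by have := e2 j; rewrite !ffunE => /negb_inj.
Qed.

Lemma card_z4_2torsion : #|[pred x : 'Z_4 | x *+ 2 == 0]| = 2%N.
Proof.
have /eq_card -> : [pred x : 'Z_4 | x *+ 2 == 0] =i pred2 0 2.
  by case=> -[|[|[|[|?]]]] ?.
by rewrite card2.
Qed.

Definition non_2torsion_signatures (k1 k2 : nat) :
    {set ({ffun 'I_k1 -> 'Z_4} * {ffun 'I_k2 -> bool})} :=
  setX (~: [set u | u \in ffun_on [pred x | x *+ 2 == 0]]) setT.

Lemma card_non_2torsion_signatures (k1 k2 : nat) :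
  #|non_2torsion_signatures k1 k2| = ((4 ^ k1 - 2 ^ k1) * 2 ^ k2)%N.
Proof.
rewrite cardsX cardsT card_ffun card_bool card_ord cardsCs setCK cardsE.
by rewrite card_ffun_on card_z4_2torsion card_ffun !card_ord.
Qed.

Lemma card_non_2torsion_additive (k1 k2 : nat) (T : finType)
    (F : T -> 'rV['Z_4]_k1 -> 'rV['Z_2]_k2 -> 'Z_4) :
  (forall t, jointly_additive (F t)) ->
  (forall t, ~ (forall a b, F t a b *+ 2 = 0)) ->
  (forall t u, (forall a b, F t a b = F u a b) -> t = u) ->
  (#|T| <= (4 ^ k1 - 2 ^ k1) * 2 ^ k2)%N.
Proof.
move=> FD Fnon2 Finj.
have sigFinj : injective (fun t => z4_signature (F t)).
  by move=> t u /(z4_signature_inj (FD t) (FD u)) /Finj.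
rewrite -card_non_2torsion_signatures -(card_imset predT sigFinj).
apply/subset_leq_card/subsetP => _ /imsetP[t _ ->].
rewrite !inE andbT; apply: contra_notN (Fnon2 t) => /forallP e2.
apply: jointly_additive_2torsion => // j.
by have /eqP := e2 j; rewrite ffunE.
Qed.

Lemma lee_weightD (x y : 'Z_4) :
  (lee_weight (x + y)%R <= lee_weight x + lee_weight y)%N.
Proof. by case: x => -[|[|[|[|?]]]] ?; case: y => -[|[|[|[|?]]]] ?. Qed.

Lemma lee_weight_vecD (n : nat) (x y : 'rV['Z_4]_n) :
  (lee_weight_vec (x + y)%R <= lee_weight_vec x + lee_weight_vec y)%N.
Proof.
rewrite /lee_weight_vec -big_split /=; apply: leq_sum => i _.
by rewrite mxE lee_weightD.
Qed.

Lemma lee_weight_vec_delta (n : nat) (c : 'Z_4) (i : 'I_n) :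
  lee_weight_vec (c *: 'e_i) = lee_weight c.
Proof.
rewrite /lee_weight_vec (bigD1 i) //= big1 => [|k /negPf ki];
  by rewrite !mxE ?eqxx ?ki ?mulr1 ?mulr0 ?addn0.
Qed.

Lemma lee_weight_sign (s : bool) : lee_weight ((-1) ^+ s) = 1%N.
Proof. by case: s. Qed.

Lemma z4_projective_small_dual (n : nat) (C : {set 'rV['Z_4]_n}) x :
  z4_projective C -> (forall y, y \in C -> (x *m y^T) 0 0 = 0) ->
  (lee_weight_vec x <= 2)%N -> x = 0.
Proof.
move=> proj xC wx; apply/eqP; apply: contraTT wx => x0; rewrite -ltnNge.
apply: proj x0; rewrite inE; apply/forall_inP => y yC.
by rewrite -[X in _ == X](xC y yC) !mxE; apply/eqP/eq_bigr => i _; rewrite mxE.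
Qed.

Lemma z4_projective_coord_not_2torsion (n : nat) (C : {set 'rV['Z_4]_n}) i :
  z4_projective C -> ~ (forall y, y \in C -> y 0 i *+ 2 = 0).
Proof.
move=> proj C2.
have /matrixP/(_ 0 i)/eqP : (2%:R *: 'e_i : 'rV['Z_4]_n) = 0.
  apply: (z4_projective_small_dual proj); last by rewrite lee_weight_vec_delta.
  by move=> y yC; rewrite -scalemxAl -rowE !mxE mulr_natl C2.
by rewrite !mxE !eqxx.
Qed.

Lemma z4_projective_coords_not_sign_proportional (n : nat)
    (C : {set 'rV['Z_4]_n}) i j (s : bool) :
  z4_projective C -> i != j -> ~ (forall y, y \in C -> y 0 i = (-1) ^+ s * y 0 j).
Proof.
move=> proj ij Cij.
have /matrixP/(_ 0 i)/eqP : ('e_i - (-1) ^+ s *: 'e_j : 'rV['Z_4]_n) = 0.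
  apply: (z4_projective_small_dual proj).
    move=> y yC; rewrite mulmxBl -scalemxAl.
    by rewrite -!rowE !mxE (Cij y yC) subrr.
  rewrite -(scaleNr ((-1) ^+ s)) -signrN -[X in X + _]scale1r.
  apply: leq_trans (lee_weight_vecD _ _) _.
  by rewrite !lee_weight_vec_delta lee_weight_sign.
by rewrite !mxE !eqxx (negPf ij) mulr0 subr0.
Qed.

Lemma z4_projective_signed_coord_inj (n : nat) (C : {set 'rV['Z_4]_n})
    i i' (s s' : bool) :
  z4_projective C ->
  (forall y, y \in C -> (-1) ^+ s * y 0 i = (-1) ^+ s' * y 0 i') ->
  (i, s) = (i', s').
Proof.
move=> proj e.
have [ii'|ii'] := eqVneq i i'; last first.
  case: (z4_projective_coords_not_sign_proportional (s := s (+) s') proj ii').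
  by move=> y yC; rewrite signr_addb -mulrA -(e y yC) signrMK.
subst i'; have [-> // | ss'] := eqVneq s s'.
have s'E : s' = ~~ s by case: s s' ss' {e} => -[].
case: (z4_projective_coord_not_2torsion (i := i) proj) => y /e; rewrite s'E.
rewrite signrN mulNr => /eqP; rewrite -addr_eq0 -mulr2n -mulrnAr => /eqP y2.
by rewrite -(signrMK s (y 0 i *+ 2)) y2 mulr0.
Qed.

Lemma halve_count_bound (n k1 k2 : nat) :
  (n * 2 <= (4 ^ k1 - 2 ^ k1) * 2 ^ k2)%N ->
  (n <= 2 ^ (2 * k1 + k2 - 1) - 2 ^ (k1 + k2 - 1))%N.
Proof.
case: k1 => [|k]; first by rewrite subnn mul0n leqn0 muln_eq0 orbF => /eqP ->.
have -> : (2 * k.+1 + k2 - 1 = (k + k + k2).+1)%N by lia.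
have -> : (k.+1 + k2 - 1 = k + k2)%N by lia.
have -> : (4 = 2 * 2)%N by [].
rewrite !expnS !expnMn !expnD.
have := expn_gt0 2 k; have := expn_gt0 2 k2.
move: (2 ^ k)%N (2 ^ k2)%N => X Y; rewrite !ltnS => HX HY.
nia.
Qed.

Theorem proposition4p2 (n k1 k2 : nat) (C : {set 'rV['Z_4]_n}) :
  z4_linear_code C -> z4_code_type k1 k2 C -> z4_projective C ->
  (n <= 2 ^ (2 * k1 + k2 - 1) - 2 ^ (k1 + k2 - 1))%N.
Proof.
move=> _ [f [fD _ _ Cf]] proj.
pose F (t : 'I_n * bool) a b := (-1) ^+ t.2 * f a b 0 t.1.
have FD t : jointly_additive (F t) by move=> a1 b1 a2 b2; rewrite /F fD mxE mulrDr.
have Fnon2 t : ~ (forall a b, F t a b *+ 2 = 0).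
  move=> F2; apply: (z4_projective_coord_not_2torsion (i := t.1) proj) => _ /Cf[a [b <-]].
  by rewrite -(signrMK t.2 (_ *+ 2)) mulrnAr F2 mulr0.
have Finj t u : (forall a b, F t a b = F u a b) -> t = u.
  move: t u => [i s] [i' s'] e.
  by apply: (z4_projective_signed_coord_inj proj) => _ /Cf[a [b <-]]; apply: e.
apply: halve_count_bound.
by have := card_non_2torsion_additive FD Fnon2 Finj; rewrite card_prod card_ord card_bool.
Qed.
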